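(* Let $I\subseteq\mathbb{R}$ be an interval equipped with its Borel $\sigma$-algebra and Lebesgue measure $\lambda$, and let $\Theta\subseteq\mathbb{R}$ be an interval. Let $\{p_\theta\}_{\theta\in\Theta}$ be a family of strictly positive probability densities on $I$ with respect to $\lambda$, with $\mathbb{P}_\theta=p_\theta\cdot\lambda$, having strictly monotone likelihood ratio: for all $\theta'<\theta''$ in $\Theta$, the function $x\mapsto p_{\theta''}(x)/p_{\theta'}(x)$ is strictly increasing on $I$. Fix $\theta_1\in\Theta$ such that $\Theta_1=\,]-\infty,\theta_1]\cap\Theta\neq\emptyset$ and $\Theta_0=\,]\theta_1,+\infty[\cap\Theta\neq\emptyset$. Then a measurable decision rule $\phi:I\to\{0,1\}$ is an expert for the choice between $\Theta_1$ and $\Theta_0$ if and only if there exists $t\in\overline{\mathbb{R}}=[-\infty,+\infty]$ such that $\phi=f_t$ $\lambda$-almost everywhere, where $f_t(x)=\mathbf{1}_{]-\infty,t[}(x)$.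
   Context: Given a statistical model $(\Omega,\mathcal{A},(\mathbb{P}_\theta)_{\theta\in\Theta})$ in which all $\mathbb{P}_\theta$ have strictly positive densities with respect to a common measure $\mu$, and a partition $\Theta=\Theta_0\cup\Theta_1$ (disjoint), a measurable decision rule $\phi:(\Omega,\mathcal{A})\to\{0,1\}$ (the value $d$ meaning ''decide $\theta\in\Theta_d$'') is called an expert for the choice between $\Theta_0$ and $\Theta_1$ if for every pair $(\theta_0,\theta_1)\in\Theta_0\times\Theta_1$ and every non-negligible event $C\in\mathcal{A}$ (i.e. $\mu(C)>0$) one has $$\frac{\mathbb{P}_{\theta_1}(C\cap\{\phi=1\})}{\mathbb{P}_{\theta_1}(C)}\;\geq\;\frac{\mathbb{P}_{\theta_0}(C\cap\{\phi=1\})}{\mathbb{P}_{\theta_0}(C)}.$$ Here $\Omega=I$, $\mu=\lambda$, decision $1$ corresponds to $\Theta_1=\,]-\infty,\theta_1]\cap\Theta$ and decision $0$ to $\Theta_0=\,]\theta_1,+\infty[\cap\Theta$. *)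

From HB Require Import structures.
From mathcomp Require Import all_boot all_order all_algebra.
From mathcomp Require Import all_classical all_reals all_analysis.
Set Implicit Arguments. Unset Strict Implicit. Unset Printing Implicit Defensive.
Import Order.TTheory GRing.Theory Num.Theory.
Local Open Scope classical_set_scope.
Local Open Scope ring_scope.

(* P_theta(A) = \int_A p_theta d lambda, as a real number (all sets used are
   subsets of I, where p_theta is a probability density, so this is finite). *)
Definition Pth {R : realType} (p : R -> R -> R) (th : R) (A : set R) : R :=
  fine (\int[@lebesgue_measure R]_(x in A) (p th x)%:E).

Definition pos_density_family {R : realType} (I Theta : interval R)
    (p : R -> R -> R) : Prop :=
  forall th, th \in Theta ->
    [/\ measurable_fun [set` I] (p th),
        (forall x, x \in I -> 0 < p th x) &
        (\int[@lebesgue_measure R]_(x in [set` I]) (p th x)%:E = 1)%E].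

Definition strict_MLR {R : realType} (I Theta : interval R)
    (p : R -> R -> R) : Prop :=
  forall th' th'', th' \in Theta -> th'' \in Theta -> th' < th'' ->
    forall x y, x \in I -> y \in I -> x < y ->
      p th'' x / p th' x < p th'' y / p th' y.

(* phi : I -> {0,1} (value true = decision 1 = "theta in Theta1") is an expert
   for the choice between Theta1 (decision 1) and Theta0 (decision 0):
   for all theta1 in Theta1, theta0 in Theta0, and every measurable C subset of I
   with lambda(C) > 0,
   P_theta1(C /\ {phi=1}) / P_theta1(C) >= P_theta0(C /\ {phi=1}) / P_theta0(C). *)
Definition expert {R : realType} (I : interval R) (p : R -> R -> R)
    (Theta1 Theta0 : set R) (phi : R -> bool) : Prop :=
  forall t1 t0, Theta1 t1 -> Theta0 t0 ->
    forall C : set R, measurable C -> C `<=` [set` I] ->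
      (0 < @lebesgue_measure R C)%E ->
      Pth p t0 (C `&` [set x | phi x]) / Pth p t0 C
        <= Pth p t1 (C `&` [set x | phi x]) / Pth p t1 C.

Definition f_ind {R : realType} (t : \bar R) (x : R) : bool := (x%:E < t)%E.

From HB Require Import structures.
From mathcomp Require Import all_boot all_order all_algebra.
From mathcomp Require Import all_classical all_reals all_analysis.
From mathcomp Require Import measurable_realfun.
Set Implicit Arguments.
Unset Strict Implicit.
Unset Printing Implicit Defensive.
Import Order.TTheory GRing.Theory Num.Theory.
Local Open Scope classical_set_scope.
Local Open Scope ring_scope.

(* Write A and B for the parts of a set C on which a rule decides 1 and 0.
   Since P_th(C) = P_th(A) + P_th(B), the expert inequality for th1 < th0 and C
   is equivalent to P_th0(A) P_th1(B) <= P_th1(A) P_th0(B).  If A lies to the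
   left of a point s of I and B to its right, the strict MLR property with
   c = p_th0(s) / p_th1(s) gives p_th0 < c p_th1 on A and p_th0 >= c p_th1 on B;
   integrating yields the inequality, strictly when A and B are not null.
   Hence every threshold rule f_t is an expert, and so is every rule equal to
   one a.e.  Conversely, if phi is an expert then for every s one of the sets
   {phi = 0} /\ ]-oo, s[ and {phi = 1} /\ ]s, +oo[ is null (take C to be their
   union).  Let t be the supremum of the s for which the first one is null: the
   points where phi and f_t differ are covered by such null sets at rational
   cuts s, together with the single point t. *)

Lemma ler_ratio_sum (F : realFieldType) (a0 b0 a1 b1 : F) :
  0 < a0 + b0 -> 0 < a1 + b1 ->
  (a0 / (a0 + b0) <= a1 / (a1 + b1)) = (a0 * b1 <= a1 * b0).
Proof.
move=> s0 s1; rewrite ler_pdivrMr // mulrAC ler_pdivlMr //.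
by rewrite !mulrDr [a0 * a1]mulrC lerD2l.
Qed.

Lemma measurable_setI_bool d (T : measurableType d) (D : set T) (f : T -> bool) :
  measurable D -> measurable_fun D f -> measurable (D `&` [set x | f x]).
Proof. by move=> mD mf; exact: mf. Qed.

Lemma setUI_pred T (A B : set T) (f : T -> bool) :
  A `<=` [set x | ~~ f x] -> B `<=` [set x | f x] -> (A `|` B) `&` [set x | f x] = B.
Proof.
move=> Af Bf; apply/seteqP; split => [x [[/Af/negP//|//]]|x Bx].
by split; [right | exact: Bf].
Qed.

Lemma negligible_bigcup_countType d (T : measurableType d) (R : realType)
    (mu : {measure set T -> \bar R}) (K : countType) (F : K -> set T) :
  (forall k, mu.-negligible (F k)) -> mu.-negligible (\bigcup_k F k).
Proof.
move=> negF; pose G n := oapp F set0 (unpickle n).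
apply: (@negligibleS _ _ _ _ (\bigcup_n G n)).
  by move=> x [k _ Fkx]; exists (pickle k) => //; rewrite /G pickleK.
apply: negligible_bigcup => n; rewrite /G; case: unpickle => [k|] /=.
  exact: negF.
exact: negligible_set0.
Qed.

Section integral_positivity.
Context d (T : measurableType d) (R : realType) (mu : {measure set T -> \bar R}).
Local Open Scope ereal_scope.

Lemma integral_gt0 (D : set T) (f : T -> R) : measurable D ->
  measurable_fun D f -> (forall x, D x -> (0 < f x)%R) -> 0 < mu D ->
  0 < \int[mu]_(x in D) (f x)%:E.
Proof.
move=> mD mf f_gt0 muD.
have f_ge0 x : D x -> 0 <= (f x)%:E by move=> Dx; rewrite lee_fin ltW ?f_gt0.
rewrite lt0e integral_ge0 // andbT; apply/eqP => int0.
have : \int[mu]_(x in D) `|(f x)%:E| = 0.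
  by rewrite -int0; apply: eq_integral => x /set_mem Dx; rewrite gee0_abs ?f_ge0.
move/(ae_eq_integral_abs mu mD ((measurable_EFinP _ _).2 mf)) => [N [mN N0 DN]].
suff DN' : D `<=` N.
  by move: muD; rewrite (subset_measure0 _ _ _ N0) // ltxx.
move=> x Dx; apply: DN => /= /(_ Dx) [fx0].
by have := f_gt0 x Dx; rewrite fx0 ltxx.
Qed.

Lemma integral_lt (D : set T) (f g : T -> R) : measurable D ->
  measurable_fun D f -> measurable_fun D g ->
  (forall x, D x -> (0 <= f x < g x)%R) ->
  \int[mu]_(x in D) (f x)%:E \is a fin_num -> 0 < mu D ->
  \int[mu]_(x in D) (f x)%:E < \int[mu]_(x in D) (g x)%:E.
Proof.
move=> mD mf mg fg fin muD.
have -> : \int[mu]_(x in D) (g x)%:E =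
    \int[mu]_(x in D) ((f x)%:E + (g x - f x)%:E).
  by apply: eq_integral => x _; rewrite -EFinD addrC subrK.
rewrite ge0_integralD //; first last.
- exact/measurable_EFinP/measurable_funB.
- by move=> x /fg /andP[_ lt]; rewrite lee_fin subr_ge0 ltW.
- exact/measurable_EFinP.
- by move=> x /fg /andP[f0 _]; rewrite lee_fin.
rewrite lteDl // integral_gt0 //; first exact: measurable_funB.
by move=> x /fg /andP[_ lt]; rewrite subr_gt0.
Qed.

End integral_positivity.

Section threshold.
Context (R : realType).
Local Notation mu := (@lebesgue_measure R).

Lemma ereal_rat_between (t : \bar R) (x : R) : (t < x%:E)%E ->
  exists2 q : rat, (t < (ratr q)%:E)%E & ratr q < x.
Proof.
case: t => [r | | _] //.
  rewrite lte_fin => /rat_in_itvoo[q]; rewrite in_itv /= => /andP[rq qx].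
  by exists q; rewrite ?lte_fin.
have /rat_in_itvoo[q] : x - 1 < x by rewrite ltrBlDr ltrDl.
by rewrite in_itv /= => /andP[_ qx]; exists q; rewrite ?ltNyr.
Qed.

Lemma ae_eq_f_ind (D : set R) (phi : R -> bool) :
  (forall s, mu.-negligible (D `&` [set x | ~~ phi x] `&` `]-oo, s[) \/
             mu.-negligible (D `&` [set x | phi x] `&` `]s, +oo[)) ->
  exists t : \bar R, {ae mu, forall x, D x -> phi x = f_ind t x}.
Proof.
move=> null_side.
set Z := D `&` [set x | ~~ phi x].
set T := [set s | mu.-negligible (Z `&` `]-oo, s[)].
have T_down u s : T u -> s <= u -> T s.
  move=> Tu su; apply: negligibleS Tu => x [Zx]; rewrite /= in_itv /= => xs.
  by split; rewrite //= in_itv /= (lt_le_trans xs su).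
pose t := ereal_sup (EFin @` T); exists t.
pose N (q : rat) := if `[< T (ratr q) >] then Z `&` `]-oo, ratr q[
                    else D `&` [set x | phi x] `&` `]ratr q, +oo[.
have negN q : mu.-negligible (N q).
  by rewrite /N; case: asboolP => // nTq; case: (null_side (ratr q)).
suff bad_sub : ~` [set x | D x -> phi x = f_ind t x] `<=`
    (\bigcup_q N q) `|` [set fine t].
  suff : mu.-negligible (~` [set x | D x -> phi x = f_ind t x]) by [].
  apply: (@negligibleS _ _ _ mu _ _ bad_sub); apply: negligibleU.
    exact: negligible_bigcup_countType.
  by apply/negligibleP; [exact: measurable_set1|exact: lebesgue_measure_set1].
move=> x /= /not_implyP[Dx]; rewrite /f_ind.
have [xt|tx] := ltP x%:E t; case: (boolP (phi x)) => px neq //.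
- have [_ [u Tu <-]] := ereal_sup_gt xt; rewrite lte_fin => /rat_in_itvoo[q].
  rewrite in_itv /= => /andP[xq qu].
  have Tq : T (ratr q) by apply: (T_down u) => //; rewrite ltW.
  by left; exists q => //; rewrite /N asboolT.
- move: tx; rewrite le_eqVlt => /predU1P[tx | /ereal_rat_between[q tq qx]].
    by right; rewrite /= tx.
  have nTq : ~ T (ratr q).
    move=> Tq; have : ((ratr q)%:E <= t)%E by apply: ereal_sup_ubound; exists (ratr q).
    by rewrite leNgt tq.
  by left; exists q => //; rewrite /N asboolF //= in_itv /= qx.
Qed.

Lemma measurable_fun_f_ind (D : set R) (t : \bar R) : measurable_fun D (f_ind t).
Proof. exact: (measurable_fun_lte (@EFin_measurable R D) (measurable_cst t)). Qed.

Lemma f_ind_cut_in_itv (I : interval R) (t : \bar R) (x y : R) :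
  x \in I -> y \in I -> f_ind t x -> ~~ f_ind t y -> exists2 s, t = s%:E & s \in I.
Proof.
rewrite /f_ind; case: t => [s | | ] xI yI xt yt; last 2 first.
- by rewrite ltey in yt.
- by rewrite ltNge leNye in xt.
move: xt yt; rewrite !lte_fin -leNgt => xs sy; exists s => //.
by apply: (interval_is_interval xI yI); rewrite ltW.
Qed.

End threshold.

Lemma Pth_set0 (R : realType) (p : R -> R -> R) (th : R) : Pth p th set0 = 0.
Proof. by rewrite /Pth integral_set0. Qed.

Lemma expertP (R : realType) (I : interval R) (p : R -> R -> R)
    (Theta1 Theta0 : set R) (phi : R -> bool) :
  expert I p Theta1 Theta0 phi <->
  (forall t1 t0, Theta1 t1 -> Theta0 t0 -> expert I p [set t1] [set t0] phi).
Proof.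
split => [hexp a b aT bT | hexp a b aT bT].
  by move=> a' b' aa' bb'; rewrite aa' bb'; exact: hexp.
exact: (hexp a b aT bT a b erefl erefl).
Qed.

Section density_family.
Context (R : realType) (I Theta : interval R) (p : R -> R -> R).
Hypothesis hp : pos_density_family I Theta p.
Local Notation mu := (@lebesgue_measure R).
Local Notation P := (Pth p).

Let mI : measurable [set` I] := measurable_itv I.

Let p_meas th A : th \in Theta -> measurable A -> A `<=` [set` I] ->
  measurable_fun A (fun x => (p th x)%:E).
Proof.
move=> thT mA AI; have [mp _ _] := hp thT.
by apply/measurable_EFinP; exact: measurable_funS mI AI mp.
Qed.

Let p_ge0 th A : th \in Theta -> A `<=` [set` I] -> forall x, A x -> (0 <= (p th x)%:E)%E.
Proof. by move=> thT AI x /AI Ix; have [_ pp _] := hp thT; rewrite lee_fin ltW ?pp. Qed.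

Section fixed_parameter.
Variable th : R.
Hypothesis thT : th \in Theta.

Lemma Pth_integral A : measurable A -> A `<=` [set` I] ->
  (P th A)%:E = (\int[mu]_(x in A) (p th x)%:E)%E.
Proof.
move=> mA AI; have [_ _ int1] := hp thT.
have le1 : (\int[mu]_(x in A) (p th x)%:E <= 1)%E.
  rewrite -int1; apply: (ge0_subset_integral mu mA mI) AI.
  - exact: (p_meas thT).
  - exact: (p_ge0 thT).
have ge0 : (0 <= \int[mu]_(x in A) (p th x)%:E)%E.
  by apply: integral_ge0 => x; exact: (p_ge0 thT).
by rewrite fineK // ge0_fin_numE // (le_lt_trans le1) ?ltey.
Qed.

Lemma Pth_ge0 A : measurable A -> A `<=` [set` I] -> 0 <= P th A.
Proof.
by move=> mA AI; rewrite -lee_fin Pth_integral //; apply: integral_ge0 => x; exact: (p_ge0 thT).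
Qed.

Lemma Pth_gt0 A : measurable A -> A `<=` [set` I] -> (0 < mu A)%E -> 0 < P th A.
Proof.
move=> mA AI muA; have [mp pp _] := hp thT.
rewrite -lte_fin Pth_integral // integral_gt0 //; first exact: measurable_funS mp.
by move=> x /AI; exact: pp.
Qed.

Lemma Pth_setU (A B : set R) : measurable A -> A `<=` [set` I] ->
  measurable B -> B `<=` [set` I] -> [disjoint A & B] ->
  P th (A `|` B) = P th A + P th B.
Proof.
move=> mA AI mB BI dAB; have ABI : A `|` B `<=` [set` I] by move=> x [/AI|/BI].
apply/eqP; rewrite -eqe EFinD !Pth_integral //; last exact: measurableU.
rewrite ge0_integral_setU //; first by apply: (p_meas thT) => //; exact: measurableU.
exact: p_ge0 thT ABI.
Qed.

Lemma Pth_setI_split (phi : R -> bool) C : measurable C -> C `<=` [set` I] ->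
  measurable_fun C phi ->
  P th C = P th (C `&` [set x | phi x]) + P th (C `&` [set x | ~~ phi x]).
Proof.
move=> mC CI mphi; rewrite -Pth_setU.
- by congr P; apply/seteqP; split => x; [case: (boolP (phi x)); [left|right]|case=> -[]].
- exact: measurable_setI_bool.
- by move=> x [/CI].
- exact/measurable_setI_bool/measurable_neg.
- by move=> x [/CI].
- by rewrite disj_set2E; apply/eqP/seteqP; split => x // [[_ /= ->] [_]].
Qed.

Lemma Pth_setI_ae_eq (phi psi : R -> bool) C : measurable C -> C `<=` [set` I] ->
  measurable_fun C phi -> measurable_fun C psi ->
  {ae mu, forall x, [set` I] x -> phi x = psi x} ->
  P th (C `&` [set x | phi x]) = P th (C `&` [set x | psi x]).
Proof.
move=> mC CI mphi mpsi [N [mN N0 bad_N]].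
have Cphi_meas := measurable_setI_bool mC mphi.
have Cpsi_meas := measurable_setI_bool mC mpsi.
rewrite /Pth (ge0_negligible_integral mN) //; last 2 first.
- by apply: (p_meas thT) => // x [/CI].
- by apply: (p_ge0 thT) => x [/CI].
rewrite [in RHS](ge0_negligible_integral mN) //; last 2 first.
- by apply: (p_meas thT) => // x [/CI].
- by apply: (p_ge0 thT) => x [/CI].
have eq_off_N x : C x -> ~ N x -> phi x = psi x.
  move=> Cx Nx; apply: contrapT => neq; apply: Nx; apply: bad_N => /=.
  by move/(_ (CI x Cx)).
congr (fine (integral _ _ _)); apply/seteqP.
split => x [[Cx /= fx] Nx]; split => //; split => //=.
  by rewrite -(eq_off_N x).
by rewrite (eq_off_N x).
Qed.

End fixed_parameter.

Lemma Pth_le_scale th th' A (a b : R) : th \in Theta -> th' \in Theta ->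
  measurable A -> A `<=` [set` I] -> 0 <= a -> 0 <= b ->
  (forall x, A x -> a * p th x <= b * p th' x) -> a * P th A <= b * P th' A.
Proof.
move=> thT th'T mA AI a0 b0 le_ab.
rewrite -lee_fin !EFinM !Pth_integral // -!ge0_integralZl_EFin //; last 4 first.
- exact: p_ge0 th'T AI.
- exact: p_meas th'T mA AI.
- exact: p_ge0 thT AI.
- exact: p_meas thT mA AI.
apply: ge0_le_integral => //.
- by move=> x Ax; rewrite mule_ge0 ?lee_fin //; exact: p_ge0 thT AI x Ax.
- exact: measurable_funeM (p_meas thT mA AI).
- exact: measurable_funeM (p_meas th'T mA AI).
Qed.

Lemma Pth_lt_scale th th' A (c : R) : th \in Theta -> th' \in Theta ->
  measurable A -> A `<=` [set` I] -> (0 < mu A)%E -> 0 <= c ->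
  (forall x, A x -> p th x < c * p th' x) -> P th A < c * P th' A.
Proof.
move=> thT th'T mA AI muA c0 lt_c.
have [mp pp _] := hp thT; have [mp' pp' _] := hp th'T.
rewrite -lte_fin EFinM !Pth_integral // -ge0_integralZl_EFin //; last 2 first.
- exact: p_ge0 th'T AI.
- exact: p_meas th'T mA AI.
under [X in (_ < X)%E]eq_integral do rewrite -EFinM.
apply: integral_lt => //.
- exact: measurable_funS mI AI mp.
- by apply: measurable_funM => //; exact: measurable_funS mI AI mp'.
- by move=> x Ax; rewrite ltW ?pp ?AI //= lt_c.
- by rewrite -Pth_integral.
Qed.

Lemma Pth_ratio_split th0 th1 (phi : R -> bool) C :
  th0 \in Theta -> th1 \in Theta -> measurable C -> C `<=` [set` I] ->
  measurable_fun C phi -> (0 < mu C)%E ->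
  (P th0 (C `&` [set x | phi x]) / P th0 C <= P th1 (C `&` [set x | phi x]) / P th1 C) =
  (P th0 (C `&` [set x | phi x]) * P th1 (C `&` [set x | ~~ phi x]) <=
   P th1 (C `&` [set x | phi x]) * P th0 (C `&` [set x | ~~ phi x])).
Proof.
move=> th0T th1T mC CI mphi muC.
rewrite (Pth_setI_split th0T mC CI mphi) (Pth_setI_split th1T mC CI mphi).
by apply: ler_ratio_sum; rewrite -Pth_setI_split // Pth_gt0.
Qed.

Lemma expert_pair_ae_eq th1 th0 (phi psi : R -> bool) :
  th1 \in Theta -> th0 \in Theta ->
  measurable_fun [set` I] phi -> measurable_fun [set` I] psi ->
  {ae mu, forall x, [set` I] x -> phi x = psi x} ->
  expert I p [set th1] [set th0] psi -> expert I p [set th1] [set th0] phi.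
Proof.
move=> th1T th0T mphi mpsi ae_eq psi_exp _ _ -> -> C mC CI muC.
have mphiC := measurable_funS mI CI mphi; have mpsiC := measurable_funS mI CI mpsi.
rewrite !(Pth_setI_ae_eq _ mC CI mphiC mpsiC ae_eq) //.
exact: psi_exp.
Qed.

Section likelihood_ratio.
Hypothesis hm : strict_MLR I Theta p.
Variables t1 t0 : R.
Hypotheses (t1T : t1 \in Theta) (t0T : t0 \in Theta) (t10 : t1 < t0).

Lemma mlr_lt_scale s z : s \in I -> z \in I -> z < s ->
  p t0 z < p t0 s / p t1 s * p t1 z.
Proof.
move=> sI zI zs; have [_ pp1 _] := hp t1T.
by rewrite -ltr_pdivrMr ?pp1 //; exact: hm.
Qed.

Lemma mlr_ge_scale s z : s \in I -> z \in I -> s <= z ->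
  p t0 s / p t1 s * p t1 z <= p t0 z.
Proof.
move=> sI zI; have [_ pp1 _] := hp t1T.
rewrite le_eqVlt => /predU1P[<-|sz]; first by rewrite divfK // gt_eqF ?pp1.
by rewrite -ler_pdivlMr ?pp1 // ltW //; exact: hm.
Qed.

Lemma Pth_threshold_bounds (t : \bar R) A B : measurable A -> measurable B ->
  A `<=` [set` I] `&` [set x | f_ind t x] ->
  B `<=` [set` I] `&` [set x | ~~ f_ind t x] -> A !=set0 -> B !=set0 ->
  exists2 c, 0 <= c & [/\ P t0 A <= c * P t1 A,
                         (0 < mu A)%E -> P t0 A < c * P t1 A &
                         c * P t1 B <= P t0 B].
Proof.
move=> mA mB sA sB [x /sA[Ix tx]] [y /sB[Iy ty]].
have [s ts sI] := f_ind_cut_in_itv Ix Iy tx ty.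
have AI z : A z -> [set` I] z by case/sA.
have BI z : B z -> [set` I] z by case/sB.
have As z : A z -> z < s by case/sA => _; rewrite /= /f_ind ts lte_fin.
have Bs z : B z -> s <= z by case/sB => _; rewrite /= /f_ind ts lte_fin -leNgt.
have [[_ pp0 _] [_ pp1 _]] := (hp t0T, hp t1T).
have c0 : 0 <= p t0 s / p t1 s by rewrite divr_ge0 // ltW ?pp0 ?pp1.
exists (p t0 s / p t1 s) => //; split.
- rewrite -[X in X <= _]mul1r; apply: Pth_le_scale => // z Az.
  by rewrite mul1r ltW // mlr_lt_scale ?As //; exact: AI.
- move=> muA; apply: Pth_lt_scale => // z Az.
  by rewrite mlr_lt_scale ?As //; exact: AI.
- rewrite -[X in _ <= X]mul1r; apply: Pth_le_scale => // z Bz.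
  by rewrite mul1r mlr_ge_scale ?Bs //; exact: BI.
Qed.

Lemma Pth_threshold_le (t : \bar R) A B : measurable A -> measurable B ->
  A `<=` [set` I] `&` [set x | f_ind t x] ->
  B `<=` [set` I] `&` [set x | ~~ f_ind t x] ->
  P t0 A * P t1 B <= P t1 A * P t0 B.
Proof.
move=> mA mB sA sB.
have [->|/set0P A0] := eqVneq A set0; first by rewrite !Pth_set0 !mul0r.
have [->|/set0P B0] := eqVneq B set0; first by rewrite !Pth_set0 !mulr0.
have AI : A `<=` [set` I] by move=> x /sA[].
have BI : B `<=` [set` I] by move=> x /sB[].
have [c c0 [le_A _ le_B]] := Pth_threshold_bounds mA mB sA sB A0 B0.
apply: (le_trans (ler_wpM2r (Pth_ge0 t1T mB BI) le_A)).
by rewrite -mulrA mulrCA ler_wpM2l // Pth_ge0.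
Qed.

Lemma Pth_threshold_lt (t : \bar R) A B : measurable A -> measurable B ->
  A `<=` [set` I] `&` [set x | f_ind t x] ->
  B `<=` [set` I] `&` [set x | ~~ f_ind t x] ->
  (0 < mu A)%E -> (0 < mu B)%E ->
  P t0 A * P t1 B < P t1 A * P t0 B.
Proof.
move=> mA mB sA sB muA muB.
have nonempty D : (0 < mu D)%E -> D !=set0.
  by move=> muD; apply/set0P; apply: contraTneq muD => ->; rewrite measure0 ltxx.
have AI : A `<=` [set` I] by move=> x /sA[].
have BI : B `<=` [set` I] by move=> x /sB[].
have [c c0 [_ lt_A le_B]] := Pth_threshold_bounds mA mB sA sB (nonempty A muA) (nonempty B muB).
have lt_cA : P t0 A * P t1 B < c * P t1 A * P t1 B.
  by rewrite ltr_pM2r ?lt_A // Pth_gt0.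
apply: (lt_le_trans lt_cA).
by rewrite -mulrA mulrCA ler_wpM2l // Pth_ge0.
Qed.

Lemma expert_pair_f_ind (t : \bar R) : expert I p [set t1] [set t0] (f_ind t).
Proof.
move=> _ _ -> -> C mC CI muC.
have mf := measurable_fun_f_ind (D := C) t.
rewrite Pth_ratio_split //; apply: (Pth_threshold_le (t := t)).
- exact: measurable_setI_bool.
- exact: measurable_setI_bool mC (measurable_neg mf).
- by move=> x [/CI].
- by move=> x [/CI].
Qed.

Lemma expert_pair_null (phi : R -> bool) : measurable_fun [set` I] phi ->
  expert I p [set t1] [set t0] phi -> forall s,
  mu.-negligible ([set` I] `&` [set x | ~~ phi x] `&` `]-oo, s[) \/
  mu.-negligible ([set` I] `&` [set x | phi x] `&` `]s, +oo[).
Proof.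
move=> mphi phi_exp s.
set A := _ `&` `]-oo, s[; set B := _ `&` `]s, +oo[.
have mA : measurable A.
  by apply: measurableI => //; exact/measurable_setI_bool/measurable_neg.
have mB : measurable B.
  by apply: measurableI => //; exact: measurable_setI_bool.
have [A0|A0] := pselect (mu A = 0); first by left; exact/negligibleP.
have [B0|B0] := pselect (mu B = 0); first by right; exact/negligibleP.
have muA : (0 < mu A)%E by rewrite lt0e measure_ge0 andbT; apply/eqP.
have muB : (0 < mu B)%E by rewrite lt0e measure_ge0 andbT; apply/eqP.
exfalso.
have sA : A `<=` [set` I] `&` [set x | f_ind s%:E x].
  by move=> x [[Ix _]]; rewrite /= in_itv /= /f_ind lte_fin.
have sB : B `<=` [set` I] `&` [set x | ~~ f_ind s%:E x].
  by move=> x [[Ix _]]; rewrite /= in_itv /= andbT /f_ind lte_fin -leNgt => /ltW.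
have AI : A `<=` [set` I] by move=> x /sA[].
have BI : B `<=` [set` I] by move=> x /sB[].
have CI : A `|` B `<=` [set` I] by move=> x [/AI|/BI].
have mC : measurable (A `|` B) by exact: measurableU.
have muC : (0 < mu (A `|` B))%E.
  by apply: (lt_le_trans muA); apply: le_measure; rewrite ?inE.
have A_nphi : A `<=` [set x | ~~ phi x] by move=> x [[]].
have B_phi : B `<=` [set x | phi x] by move=> x [[]].
have := phi_exp t1 t0 erefl erefl _ mC CI muC.
rewrite Pth_ratio_split //; last exact: measurable_funS mI CI mphi.
rewrite setUI_pred // setUC setUI_pred //; last by move=> x /B_phi /= ->.
rewrite mulrC [P t1 B * _]mulrC leNgt.
by rewrite (Pth_threshold_lt mA mB sA sB muA muB).
Qed.

End likelihood_ratio.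

End density_family.

Theorem proposition3p1 (R : realType) (I Theta : interval R)
    (p : R -> R -> R) (theta1 : R) :
  pos_density_family I Theta p ->
  strict_MLR I Theta p ->
  theta1 \in Theta ->
  [set th | th \in Theta /\ th <= theta1] !=set0 ->
  [set th | th \in Theta /\ theta1 < th] !=set0 ->
  forall phi : R -> bool, measurable_fun [set` I] phi ->
    expert I p [set th | th \in Theta /\ th <= theta1]
               [set th | th \in Theta /\ theta1 < th] phi
    <-> exists t : \bar R,
          {ae @lebesgue_measure R, forall x, [set` I] x -> phi x = f_ind t x}.
Proof.
move=> hp hm _ [a [aT a_le]] [b [bT b_gt]] phi mphi; split => [phi_exp | [t ae_t]].
- apply: ae_eq_f_ind; apply: (expert_pair_null hp hm aT bT (le_lt_trans a_le b_gt) mphi).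
  by move/expertP: phi_exp; apply.
- apply/expertP => t1 t0 [t1T t1_le] [t0T t0_gt].
  apply: (expert_pair_ae_eq hp t1T t0T mphi (measurable_fun_f_ind t) ae_t).
  exact: (expert_pair_f_ind hp hm t1T t0T (le_lt_trans t1_le t0_gt)).
Qed.
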